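(* Let $G$ be a compact abelian group which is a torsion group (every element has finite order), and let $K \subset \widehat{G}$. Then $K$ is strictly positive definite if and only if $K$ is ubiquitous.
   Context: A trigonometric polynomial on $\widehat{G}$ is a function of the form $\gamma \mapsto \sum_{i=1}^n c_i \gamma(x_i)$ with $x_i \in G$, $c_i \in \mathbb{C}$. A subset $K \subset \widehat{G}$ is strictly positive definite if the only trigonometric polynomial on $\widehat{G}$ vanishing at every point of $K$ is the identically zero function. A subset $K \subset \widehat{G}$ is ubiquitous if for every subgroup $H$ of $\widehat{G}$ of finite index and every $\gamma \in \widehat{G}$ the coset $\gamma H$ meets $K$. *)

From Stdlib Require Import Reals List.
Open Scope R_scope.

Definition C := (R * R)%type.
Definition C0 : C := (0, 0).
Definition C1 : C := (1, 0).
Definition Cadd (z w : C) : C := (fst z + fst w, snd z + snd w).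
Definition Cmul (z w : C) : C :=
  (fst z * fst w - snd z * snd w, fst z * snd w + snd z * fst w).
Definition Cconj (z : C) : C := (fst z, - snd z).
Definition Cnorm2 (z : C) : R := fst z * fst z + snd z * snd z.

Definition C_open (U : C -> Prop) : Prop :=
  forall z, U z -> exists eps, 0 < eps /\
    forall w, Cnorm2 (fst w - fst z, snd w - snd z) < eps -> U w.

Record CompactAbGroup := {
  carrier :> Type;
  gadd : carrier -> carrier -> carrier;
  gzero : carrier;
  gopp : carrier -> carrier;
  gaddA : forall x y z, gadd x (gadd y z) = gadd (gadd x y) z;
  gaddC : forall x y, gadd x y = gadd y x;
  gadd0 : forall x, gadd x gzero = x;
  gaddN : forall x, gadd x (gopp x) = gzero;
  gopen : (carrier -> Prop) -> Prop;
  gopen_full : gopen (fun _ => True);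
  gopen_inter : forall U V, gopen U -> gopen V -> gopen (fun x => U x /\ V x);
  gopen_union : forall (I : Type) (U : I -> carrier -> Prop),
      (forall i, gopen (U i)) -> gopen (fun x => exists i, U i x);
  ghausdorff : forall x y, x <> y -> exists U V, gopen U /\ gopen V /\
      U x /\ V y /\ forall z, ~ (U z /\ V z);
  gcompact : forall (I : Type) (U : I -> carrier -> Prop),
      (forall i, gopen (U i)) -> (forall x, exists i, U i x) ->
      exists l : list I, forall x, exists i, In i l /\ U i x;
  gadd_cont : forall x y W, gopen W -> W (gadd x y) ->
      exists U V, gopen U /\ gopen V /\ U x /\ V y /\
        forall u v, U u -> V v -> W (gadd u v);
  gopp_cont : forall W, gopen W -> gopen (fun x => W (gopp x))
}.

Arguments gadd {_}.
Arguments gzero {_}.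

Fixpoint gnmul {G : CompactAbGroup} (n : nat) (x : G) : G :=
  match n with O => gzero | S m => gadd x (gnmul m x) end.

Definition torsion (G : CompactAbGroup) : Prop :=
  forall x : G, exists n : nat, (n > 0)%nat /\ gnmul n x = gzero.

Record character (G : CompactAbGroup) := {
  chi :> G -> C;
  chi_hom : forall x y, chi (gadd x y) = Cmul (chi x) (chi y);
  chi_unit : forall x, Cnorm2 (chi x) = 1;
  chi_cont : forall V, C_open V -> gopen G (fun x => V (chi x))
}.

(** Group law of the dual, as relations (pointwise product / conjugate). *)
Definition dual_is_one {G} (e : character G) := forall x, e x = C1.
Definition dual_is_prod {G} (a b c : character G) :=
  forall x, c x = Cmul (a x) (b x).
Definition dual_is_inv {G} (a b : character G) :=
  forall x, b x = Cconj (a x).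

Definition dual_subgroup {G} (H : character G -> Prop) : Prop :=
  (forall e, dual_is_one e -> H e) /\
  (forall a b c, H a -> H b -> dual_is_prod a b c -> H c) /\
  (forall a b, H a -> dual_is_inv a b -> H b).

Definition in_coset {G} (delta : character G) (H : character G -> Prop)
    (gamma : character G) : Prop :=
  exists eta, H eta /\ dual_is_prod delta eta gamma.

Definition finite_index {G} (H : character G -> Prop) : Prop :=
  exists l : list (character G), forall gamma,
    exists delta, In delta l /\ in_coset delta H gamma.

(** Trigonometric polynomial on the dual: gamma |-> sum c_i gamma(x_i). *)
Definition trig_poly {G : CompactAbGroup} (p : list (G * C))
    (gamma : character G) : C :=
  fold_right (fun xc acc => Cadd (Cmul (snd xc) (gamma (fst xc))) acc) C0 p.

Definition strictly_positive_definite {G : CompactAbGroup}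
    (K : character G -> Prop) : Prop :=
  forall p : list (G * C),
    (forall gamma, K gamma -> trig_poly p gamma = C0) ->
    forall gamma, trig_poly p gamma = C0.

Definition ubiquitous {G : CompactAbGroup} (K : character G -> Prop) : Prop :=
  forall H : character G -> Prop, dual_subgroup H -> finite_index H ->
    forall gamma : character G, exists k, K k /\ in_coset gamma H k.

From Pilot Require Import Defs.
From Stdlib Require Import Reals List Lra Lia Psatz ZArith.
From Stdlib Require Import Classical ClassicalEpsilon FunctionalExtensionality PropExtensionality.
Import Defs.
Open Scope R_scope.

(** A compact torsion group is a countable union of the closed sets [{x | n x = 0}], so by
    Baire one of them has interior, and finitely many translates of it cover the group:
    [G] has a finite exponent [M], and all characters take values in the [M]-th roots of
    unity.  In this situation every subgroup [H] of the dual is closed, i.e. a character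
    outside [H] is nontrivial somewhere on the annihilator of [H]; this is the finite
    linear algebra of the character equations plus compactness.

    If [K] is ubiquitous and a trigonometric polynomial with nodes [x_i] vanishes on [K],
    take the annihilator of the [x_i], a subgroup of finite index: every coset meets [K],
    and the polynomial is constant on cosets.  Conversely, if the coset [gamma H] misses [K],
    choose for each of the finitely many other cosets [d H] a point [x_d] annihilated by [H]
    where [d] and [gamma] differ; the product over [d] of the geometric sums
    [sum_(k < M) conj (gamma (k x_d)) delta_(k x_d)] vanishes on [K] but not at [gamma]. *)

Lemma nat_least (P : nat -> Prop) n : P n -> exists m, P m /\ forall k, P k -> (m <= k)%nat.
Proof.
  induction n as [n IH] using (well_founded_induction lt_wf). intros Pn.
  destruct (classic (exists k, (k < n)%nat /\ P k)) as [[k [Hk Pk]]|Hno].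
  - exact (IH k Hk Pk).
  - exists n. split; auto. intros k Pk. apply Nat.nlt_ge. intros Hk. apply Hno; eauto.
Qed.

Lemma nat_subgroup_multiples (P : nat -> Prop) M : (0 < M)%nat -> P M ->
  (forall a b, P a -> P b -> P (a + b)%nat) -> (forall a b, P (a + b)%nat -> P a -> P b) ->
  exists d, (0 < d)%nat /\ forall b, P b <-> (b mod d = 0)%nat.
Proof.
  intros HM PM Padd Psub.
  destruct (nat_least (fun j => 0 < j /\ P j)%nat M (conj HM PM)) as [d [[Hd Pd] Hmin]].
  assert (P0 : P 0%nat) by (apply (Psub M); rewrite ?Nat.add_0_r; auto).
  assert (Pmul : forall q, P (q * d)%nat).
  { induction q; simpl; auto. }
  exists d. split; auto. intros b. split.
  - intros Pb. pose proof (Nat.div_mod_eq b d) as Hb. rewrite Nat.mul_comm in Hb.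
    assert (Pr : P (b mod d)) by (apply (Psub ((b / d) * d)%nat); rewrite <- ?Hb; auto).
    pose proof (Nat.mod_upper_bound b d ltac:(lia)).
    destruct (Nat.eq_dec (b mod d) 0); auto.
    assert (Hr0 : (0 < b mod d)%nat) by lia.
    specialize (Hmin _ (conj Hr0 Pr)). lia.
  - intros Hb. rewrite (Nat.div_mod_eq b d), Hb, Nat.add_0_r, Nat.mul_comm. apply Pmul.
Qed.

Lemma finite_image_reps {A B : Type} (f : A -> B) (lB : list B) :
  (forall a, In (f a) lB) -> exists lA, forall a, exists a', In a' lA /\ f a' = f a.
Proof.
  intros Hf.
  enough (Hgen : exists lA, forall a, In (f a) lB -> exists a', In a' lA /\ f a' = f a).
  { destruct Hgen as [lA HlA]. eauto. }
  clear Hf. induction lB as [|b lB [lA IH]].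
  - exists nil. intros a [].
  - destruct (classic (exists a0, f a0 = b)) as [[a0 Ha0]|Hno].
    + exists (a0 :: lA). intros a [Hb|Hin].
      * exists a0. split; [left|]; congruence.
      * destruct (IH a Hin) as [a' [Ha' E]]. exists a'. split; [right|]; auto.
    + exists lA. intros a [Hb|Hin]; auto. exfalso; eauto.
Qed.

Fixpoint lists_over {A : Type} (L : list A) (n : nat) : list (list A) :=
  match n with
  | O => nil :: nil
  | S n => flat_map (fun t => map (fun a => a :: t) L) (lists_over L n)
  end.

Lemma in_lists_over {A : Type} (L : list A) t :
  (forall a, In a t -> In a L) -> In t (lists_over L (length t)).
Proof.
  induction t as [|a t IH]; simpl; intros Ht; auto.
  apply in_flat_map. exists t. split; auto. apply (in_map (fun b => b :: t)); auto.
Qed.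

Ltac Cring :=
  repeat match goal with z : C |- _ => destruct z end;
  unfold Cmul, Cadd, Cconj, C1, C0; simpl; f_equal; ring.

Lemma Cmul_comm z w : Cmul z w = Cmul w z.
Proof. Cring. Qed.
Lemma Cmul_assoc a b c : Cmul a (Cmul b c) = Cmul (Cmul a b) c.
Proof. Cring. Qed.
Lemma Cmul_ACA a b c d : Cmul (Cmul a b) (Cmul c d) = Cmul (Cmul a c) (Cmul b d).
Proof. Cring. Qed.
Lemma Cmul_1_l z : Cmul C1 z = z.
Proof. Cring. Qed.
Lemma Cmul_1_r z : Cmul z C1 = z.
Proof. Cring. Qed.
Lemma Cmul_0_l z : Cmul C0 z = C0.
Proof. Cring. Qed.
Lemma Cmul_0_r z : Cmul z C0 = C0.
Proof. Cring. Qed.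
Lemma Cmul_addr a b c : Cmul a (Cadd b c) = Cadd (Cmul a b) (Cmul a c).
Proof. Cring. Qed.
Lemma Cmul_addl a b c : Cmul (Cadd a b) c = Cadd (Cmul a c) (Cmul b c).
Proof. Cring. Qed.
Lemma Cadd_0_l z : Cadd C0 z = z.
Proof. Cring. Qed.
Lemma Cadd_assoc a b c : Cadd a (Cadd b c) = Cadd (Cadd a b) c.
Proof. Cring. Qed.
Lemma Cconj_mul a b : Cconj (Cmul a b) = Cmul (Cconj a) (Cconj b).
Proof. Cring. Qed.
Lemma Cnorm2_mul a b : Cnorm2 (Cmul a b) = Cnorm2 a * Cnorm2 b.
Proof. destruct a, b; unfold Cmul, Cnorm2; simpl; ring. Qed.

Lemma Cmul_conj_r z : Cnorm2 z = 1 -> Cmul z (Cconj z) = C1.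
Proof. destruct z; unfold Cmul, Cconj, Cnorm2, C1; simpl; intros H; f_equal; lra. Qed.

Lemma C1_neq_C0 : C1 <> C0.
Proof. unfold C1, C0; intros E; injection E; lra. Qed.

Lemma Cmul_eq0 a b : Cmul a b = C0 -> a = C0 \/ b = C0.
Proof.
  destruct a as [a1 a2], b as [b1 b2]; unfold Cmul, C0; simpl; intros E.
  injection E as E1 E2.
  destruct (Req_dec (a1 * a1 + a2 * a2) 0) as [Ha|Ha].
  - left; f_equal; nra.
  - right; f_equal; apply Rmult_eq_reg_l with (a1 * a1 + a2 * a2); auto.
    + transitivity (a1 * (a1 * b1 - a2 * b2) + a2 * (a1 * b2 + a2 * b1)); [ring|].
      rewrite E1, E2; ring.
    + transitivity (a1 * (a1 * b2 + a2 * b1) - a2 * (a1 * b1 - a2 * b2)); [ring|].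
      rewrite E1, E2; ring.
Qed.

Fixpoint Cpow (z : C) (n : nat) : C :=
  match n with O => C1 | S m => Cmul z (Cpow z m) end.

Lemma Cpow_add z a b : Cpow z (a + b) = Cmul (Cpow z a) (Cpow z b).
Proof. induction a; simpl. - now rewrite Cmul_1_l. - now rewrite IHa, Cmul_assoc. Qed.
Lemma Cpow_mul z a b : Cpow z (a * b) = Cpow (Cpow z b) a.
Proof. induction a; simpl; auto. now rewrite Cpow_add, IHa. Qed.
Lemma Cpow_Cmul a b n : Cpow (Cmul a b) n = Cmul (Cpow a n) (Cpow b n).
Proof. induction n; simpl. - now rewrite Cmul_1_l. - now rewrite IHn, Cmul_ACA. Qed.
Lemma Cpow_C1 n : Cpow C1 n = C1.
Proof. induction n; simpl; auto. now rewrite IHn, Cmul_1_l. Qed.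
Lemma Cconj_pow a n : Cconj (Cpow a n) = Cpow (Cconj a) n.
Proof. induction n; simpl. - Cring. - now rewrite Cconj_mul, IHn. Qed.

Lemma Cpow_pred_mul z M : (0 < M)%nat -> Cpow z M = C1 -> Cmul (Cpow z (M - 1)) z = C1.
Proof.
  intros HM Hz. rewrite <- Hz. replace M with (S (M - 1)) at 2 by lia.
  apply Cmul_comm.
Qed.

Definition Cexp2pi (t : R) : C := (cos (2 * PI * t), sin (2 * PI * t)).

Lemma Cexp2pi_add a b : Cexp2pi (a + b) = Cmul (Cexp2pi a) (Cexp2pi b).
Proof.
  unfold Cexp2pi, Cmul; simpl. replace (2 * PI * (a + b)) with (2 * PI * a + 2 * PI * b) by ring.
  rewrite cos_plus, sin_plus. f_equal; ring.
Qed.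
Lemma Cexp2pi_0 : Cexp2pi 0 = C1.
Proof. unfold Cexp2pi, C1. now rewrite Rmult_0_r, cos_0, sin_0. Qed.
Lemma Cexp2pi_norm t : Cnorm2 (Cexp2pi t) = 1.
Proof. unfold Cexp2pi, Cnorm2; simpl. pose proof (sin2_cos2 (2 * PI * t)). unfold Rsqr in H. lra. Qed.
Lemma Cexp2pi_INR n : Cexp2pi (INR n) = C1.
Proof.
  induction n. - apply Cexp2pi_0.
  - rewrite S_INR, Cexp2pi_add, IHn, Cmul_1_l.
    unfold Cexp2pi, C1. now rewrite Rmult_1_r, cos_2PI, sin_2PI.
Qed.
Lemma Cexp2pi_IZR k : Cexp2pi (IZR k) = C1.
Proof.
  destruct (Z_le_gt_dec 0 k).
  - rewrite <- (Z2Nat.id k l), <- INR_IZR_INZ. apply Cexp2pi_INR.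
  - assert (H : Cexp2pi (IZR k + INR (Z.to_nat (- k))) = C1).
    { rewrite INR_IZR_INZ, Z2Nat.id, <- plus_IZR by lia.
      replace (k + - k)%Z with 0%Z by ring. apply Cexp2pi_0. }
    now rewrite Cexp2pi_add, Cexp2pi_INR, Cmul_1_r in H.
Qed.
Lemma Cexp2pi_pow t n : Cpow (Cexp2pi t) n = Cexp2pi (INR n * t).
Proof.
  induction n; simpl Cpow. - now rewrite Rmult_0_l, Cexp2pi_0.
  - rewrite IHn, <- Cexp2pi_add, S_INR. f_equal; ring.
Qed.

Lemma Cexp2pi_eq1_frac r : 0 <= r < 1 -> Cexp2pi r = C1 -> r = 0.
Proof.
  intros [H0 H1] HE. unfold Cexp2pi, C1 in HE. injection HE as Hc Hs.
  pose proof PI_RGT_0.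
  destruct (sin_eq_O_2PI_0 (2 * PI * r)) as [A|[A|A]]; try nra.
  rewrite A, cos_PI in Hc. lra.
Qed.

Lemma Cexp2pi_eq1 s : Cexp2pi s = C1 -> exists k, s = IZR k.
Proof.
  intros H. exists (Int_part s). destruct (base_Int_part s) as [B1 B2].
  enough (s - IZR (Int_part s) = 0) by lra.
  apply Cexp2pi_eq1_frac; [lra|].
  replace (s - IZR (Int_part s)) with (s + IZR (- Int_part s)) by (rewrite opp_IZR; ring).
  now rewrite Cexp2pi_add, H, Cexp2pi_IZR, Cmul_1_l.
Qed.

Lemma Cexp2pi_surj z : Cnorm2 z = 1 -> exists t, 0 <= t <= 1 /\ z = Cexp2pi t.
Proof.
  destruct z as [a b]. unfold Cnorm2; simpl. intros H.
  pose proof PI_RGT_0.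
  assert (Ha : -1 <= a <= 1) by nra.
  pose proof (acos_bound a) as Hb.
  pose proof (cos_acos a Ha) as Hc. pose proof (sin_acos a Ha) as Hs.
  assert (Hsq : sqrt (1 - a²) = Rabs b).
  { rewrite <- sqrt_Rsqr_abs. f_equal. unfold Rsqr; lra. }
  assert (Hq : 0 <= acos a / (2 * PI) <= 1 / 2).
  { split; [apply Rmult_le_pos; [lra|]; left; apply Rinv_0_lt_compat; lra|].
    apply Rmult_le_reg_r with (2 * PI); [lra|]. field_simplify; lra. }
  destruct (Rle_dec 0 b).
  - exists (acos a / (2 * PI)). split; [lra|].
    unfold Cexp2pi. replace (2 * PI * (acos a / (2 * PI))) with (acos a) by (field; lra).
    rewrite Hc, Hs, Hsq, Rabs_right; auto; lra.
  - exists (1 - acos a / (2 * PI)). split; [lra|].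
    unfold Cexp2pi. replace (2 * PI * (1 - acos a / (2 * PI))) with (- acos a + 2 * INR 1 * PI)
      by (simpl; field; lra).
    rewrite cos_period, sin_period, cos_neg, sin_neg, Hc, Hs, Hsq, Rabs_left; [f_equal; ring|lra].
Qed.

Definition root (M j : nat) : C := Cexp2pi (INR j / INR M).

Section RootsOfUnity.
Variable M : nat.
Hypothesis M_pos : (0 < M)%nat.

Let INR_M_neq0 : INR M <> 0.
Proof. apply not_0_INR; lia. Qed.

Lemma root_norm j : Cnorm2 (root M j) = 1.
Proof. apply Cexp2pi_norm. Qed.

Lemma root_mul a b : Cmul (root M a) (root M b) = root M (a + b).
Proof. unfold root. rewrite <- Cexp2pi_add, plus_INR. f_equal. field; auto. Qed.

Lemma root_pow a n : Cpow (root M a) n = root M (n * a).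
Proof. unfold root. rewrite Cexp2pi_pow, mult_INR. f_equal. field; auto. Qed.

Lemma root_eq1 j : root M j = C1 <-> (j mod M = 0)%nat.
Proof.
  unfold root. rewrite (Nat.div_mod_eq j M) at 1.
  rewrite plus_INR, mult_INR, Rdiv_plus_distr.
  replace (INR M * INR (j / M) / INR M) with (INR (j / M)) by (field; auto).
  rewrite Cexp2pi_add, Cexp2pi_INR, Cmul_1_l.
  pose proof (Nat.mod_upper_bound j M ltac:(lia)) as Hlt.
  assert (Hq : 0 <= INR (j mod M) / INR M < 1).
  { pose proof (lt_0_INR M M_pos). pose proof (lt_INR _ _ Hlt).
    split; [apply Rmult_le_pos; [apply pos_INR|left; apply Rinv_0_lt_compat; lra]|].
    apply Rmult_lt_reg_r with (INR M); auto. field_simplify; lra. }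
  split.
  - intros H. apply Cexp2pi_eq1_frac in H; auto. apply INR_eq. simpl.
    apply Rmult_eq_reg_r with (/ INR M); [|apply Rinv_neq_0_compat]; auto. lra.
  - intros ->. unfold Rdiv. now rewrite Rmult_0_l, Cexp2pi_0.
Qed.

Lemma root_multiple q : root M (q * M) = C1.
Proof. apply root_eq1. apply Nat.Div0.mod_mul. Qed.

Lemma root_self : root M M = C1.
Proof. apply root_eq1, Nat.Div0.mod_same. Qed.

Lemma root_mod j : root M j = root M (j mod M).
Proof.
  rewrite (Nat.div_mod_eq j M) at 1.
  rewrite <- root_mul, (Nat.mul_comm M), root_multiple. apply Cmul_1_l.
Qed.

Lemma root_surj z : Cnorm2 z = 1 -> Cpow z M = C1 -> exists j, z = root M j.
Proof.
  intros Hn Hp. destruct (Cexp2pi_surj z Hn) as [t [Ht ->]].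
  rewrite Cexp2pi_pow in Hp. destruct (Cexp2pi_eq1 _ Hp) as [k Hk].
  pose proof (lt_0_INR M M_pos).
  assert (Hk0 : (0 <= k)%Z) by (apply le_IZR; nra).
  exists (Z.to_nat k). unfold root. f_equal.
  rewrite INR_IZR_INZ, Z2Nat.id, <- Hk by auto. field; auto.
Qed.

Lemma root_subgroup_cyclic (Z : C -> Prop) :
  Z C1 -> (forall a b, Z a -> Z b -> Z (Cmul a b)) -> (forall z, Z z -> exists j, z = root M j) ->
  exists zeta e, Z zeta /\ (0 < e)%nat /\ Cpow zeta e = C1 /\
    (forall z, Z z -> exists t, z = Cpow zeta t) /\
    (forall w, Cnorm2 w = 1 -> Cpow w e = C1 -> exists c, w = Cpow zeta c).
Proof.
  intros Z1 Zmul Zroot.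
  assert (Zpow : forall a n, Z a -> Z (Cpow a n)) by (intros a n Za; induction n; simpl; auto).
  destruct (nat_subgroup_multiples (fun j => Z (root M j)) M) as [d [Hd Hmult]]; auto.
  - now rewrite root_self.
  - intros a b Za Zb. rewrite <- root_mul; auto.
  - intros a b Zab Za.
    replace (root M b) with (Cmul (root M (a + b)) (Cpow (root M a) (M - 1))); auto.
    rewrite root_pow, root_mul by auto. rewrite (root_mod b), root_mod.
    f_equal. replace (a + b + (M - 1) * a)%nat with (b + a * M)%nat by nia.
    apply Nat.Div0.mod_add.
  - assert (HdM : (M mod d = 0)%nat) by (apply Hmult; now rewrite root_self).
    set (e := (M / d)%nat).
    assert (HMde : M = (d * e)%nat) by (unfold e; pose proof (Nat.div_mod_eq M d); lia).
    exists (root M d), e. split; [apply Hmult, Nat.Div0.mod_same|].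
    split; [nia|]. split.
    { rewrite root_pow, (Nat.mul_comm e), <- HMde by auto. now apply root_self. }
    split.
    + intros z Zz. destruct (Zroot z Zz) as [j ->].
      pose proof (proj1 (Hmult j) Zz). exists (j / d)%nat.
      rewrite root_pow by auto. f_equal. pose proof (Nat.div_mod_eq j d). lia.
    + intros w Hw Hwe.
      destruct (root_surj w Hw) as [h ->].
      { now rewrite HMde, Cpow_mul, Hwe, Cpow_C1. }
      rewrite root_pow, root_eq1 in Hwe by auto.
      exists (h / d)%nat. rewrite root_pow by auto. f_equal.
      apply Nat.Div0.mod_divides in Hwe. destruct Hwe as [k Hk].
      rewrite HMde in Hk. assert (h = d * k)%nat by nia. subst h.
      rewrite Nat.mul_comm, Nat.div_mul by lia. lia.
Qed.

End RootsOfUnity.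

Fixpoint Cgeom (z : C) (n : nat) : C :=
  match n with O => C0 | S m => Cadd (Cpow z m) (Cgeom z m) end.

Lemma Cgeom_telescope z n : Cadd (Cmul z (Cgeom z n)) C1 = Cadd (Cgeom z n) (Cpow z n).
Proof.
  induction n; simpl; [Cring|].
  rewrite Cmul_addr, <- Cadd_assoc, IHn. Cring.
Qed.

Lemma Cgeom_eq0 z n : Cpow z n = C1 -> z <> C1 -> Cgeom z n = C0.
Proof.
  intros Hn Hz. pose proof (Cgeom_telescope z n) as H. rewrite Hn in H.
  destruct (Cmul_eq0 (fst z - 1, snd z) (Cgeom z n)) as [E|E]; auto.
  - revert H. destruct z as [a b], (Cgeom _ _) as [c d].
    unfold Cmul, Cadd, C0, C1; simpl. intros H. injection H as H1 H2. f_equal; lra.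
  - exfalso. apply Hz. destruct z as [a b]. injection E as E1 E2. unfold C1. f_equal; lra.
Qed.

Lemma Cgeom_C1 n : Cgeom C1 n = (INR n, 0).
Proof.
  induction n; simpl Cgeom; [reflexivity|]. rewrite IHn, Cpow_C1, S_INR.
  unfold Cadd, C1; simpl. f_equal; ring.
Qed.

Lemma Cprod_eq0 (l : list C) : In C0 l -> fold_right Cmul C1 l = C0.
Proof.
  induction l as [|z l IH]; simpl; [contradiction|]. intros [->|Hl].
  - apply Cmul_0_l.
  - rewrite IH; auto. apply Cmul_0_r.
Qed.

Lemma Cprod_neq0 (l : list C) : (forall z, In z l -> z <> C0) -> fold_right Cmul C1 l <> C0.
Proof.
  induction l as [|z l IH]; simpl; intros Hl; [apply C1_neq_C0|].
  intros E. destruct (Cmul_eq0 _ _ E); [apply (Hl z)|apply IH]; auto.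
Qed.

Lemma Cmul_conj_eq1 a b : Cnorm2 a = 1 -> Cmul (Cconj a) b = C1 -> b = a.
Proof.
  intros Ha E. rewrite <- (Cmul_1_r a), <- E, Cmul_assoc, Cmul_conj_r, Cmul_1_l; auto.
Qed.

Lemma dependent_choice {A : Type} (R : nat -> A -> A -> Prop) (a0 : A) :
  (forall n a, exists b, R n a b) ->
  exists f : nat -> A, f 0%nat = a0 /\ forall n, R n (f n) (f (S n)).
Proof.
  intros H.
  destruct (choice (fun na b => R (fst na) (snd na) b) (fun na => H (fst na) (snd na)))
    as [next Hnext].
  exists (fix f n := match n with O => a0 | S m => next (m, f m) end).
  split; auto. intros n. apply (Hnext (n, _)).
Qed.

Section Topology.
Variable G : CompactAbGroup.

Lemma gopen_ext (U V : G -> Prop) : (forall x, U x <-> V x) -> gopen G U -> gopen G V.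
Proof.
  intros H. replace V with U; auto.
  apply functional_extensionality; intros x; apply propositional_extensionality; auto.
Qed.

Lemma gopen_union_of (S : G -> Prop) :
  (forall x, S x -> exists U, gopen G U /\ U x /\ forall y, U y -> S y) -> gopen G S.
Proof.
  intros H.
  destruct (choice (fun (i : {x | S x}) U => gopen G U /\ U (proj1_sig i) /\ forall y, U y -> S y))
    as [f Hf].
  { intros [x Hx]; apply H; auto. }
  apply gopen_ext with (fun x => exists i, f i x).
  - intros x; split.
    + intros [i Hi]. now apply (Hf i).
    + intros Hx. exists (exist _ x Hx). apply (Hf (exist _ x Hx)).
  - apply gopen_union. intros i; apply (Hf i).
Qed.

Lemma gopen_const (P : Prop) : gopen G (fun _ => P).
Proof.
  apply gopen_union_of. intros x HP. exists (fun _ => True).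
  split; auto. apply gopen_full.
Qed.

Lemma gopen_or (U V : G -> Prop) : gopen G U -> gopen G V -> gopen G (fun x => U x \/ V x).
Proof.
  intros HU HV. apply gopen_ext with (fun x => exists b : bool, if b then U x else V x).
  - intros x; split; [intros [[|] Hx]; auto|intros [Hx|Hx]; [exists true|exists false]; auto].
  - apply gopen_union. intros [|]; auto.
Qed.

Lemma gopen_inter_list (I : Type) (l : list I) (U : I -> G -> Prop) :
  (forall i, gopen G (U i)) -> gopen G (fun x => forall i, In i l -> U i x).
Proof.
  intros HU. induction l as [|a l IH].
  - apply gopen_ext with (fun _ => True); [simpl; tauto|apply gopen_full].
  - apply gopen_ext with (fun x => U a x /\ forall i, In i l -> U i x).
    + intros x; simpl; split; [intros [A B] i [->|Hi]|]; auto.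
    + apply gopen_inter; auto.
Qed.

Lemma gopen_neq (c : G) : gopen G (fun x => x <> c).
Proof.
  apply gopen_union_of. intros x Hx.
  destruct (ghausdorff G x c Hx) as [U [V [HU [_ [Ux [Vc Hd]]]]]].
  exists U. split; [|split]; auto. intros y Uy ->. apply (Hd c); auto.
Qed.

Definition gcont (f : G -> G) := forall V, gopen G V -> gopen G (fun x => V (f x)).

Lemma gcont_id : gcont (fun x => x).
Proof. intros V HV; exact HV. Qed.

Lemma gcont_const c : gcont (fun _ => c).
Proof. intros V _; apply gopen_const. Qed.

Lemma gcont_add f g : gcont f -> gcont g -> gcont (fun x => gadd (f x) (g x)).
Proof.
  intros Hf Hg V HV. apply gopen_union_of. intros x Hx.
  destruct (gadd_cont G (f x) (g x) V HV Hx) as [U [W [HU [HW [Ux [Wc Huv]]]]]].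
  exists (fun y => U (f y) /\ W (g y)). split; [apply gopen_inter; auto|].
  split; auto. intros y [A B]; auto.
Qed.

Lemma gcont_nmul n : gcont (gnmul n).
Proof.
  induction n; simpl. - apply gcont_const. - apply gcont_add; auto using gcont_id.
Qed.

Lemma compact_fip (I : Type) (F : I -> G -> Prop) :
  (forall i, gopen G (fun x => ~ F i x)) ->
  (forall l : list I, exists x, forall i, In i l -> F i x) ->
  exists x, forall i, F i x.
Proof.
  intros Hclosed Hfin. apply NNPP. intros Hno.
  destruct (gcompact G I (fun i x => ~ F i x) Hclosed) as [l Hl].
  { intros x. apply NNPP. intros Hx. apply Hno. exists x. intros i. apply NNPP; eauto. }
  destruct (Hfin l) as [x Hx]. destruct (Hl x) as [i [Hi Hix]]. auto.
Qed.

Lemma regular (p : G) (W : G -> Prop) : gopen G W -> W p ->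
  exists V O, gopen G V /\ gopen G O /\ V p /\
    (forall x, V x -> ~ O x) /\ (forall x, ~ O x -> W x).
Proof.
  intros HW Wp.
  destruct (choice (fun (q : {q | ~ W q}) (AB : (G -> Prop) * (G -> Prop)) =>
    gopen G (fst AB) /\ gopen G (snd AB) /\ fst AB p /\ snd AB (proj1_sig q) /\
    forall z, ~ (fst AB z /\ snd AB z))) as [sep Hsep].
  { intros [q Hq]. assert (p <> q) by (intros ->; auto).
    destruct (ghausdorff G p q H) as [A [B HAB]]. exists (A, B); simpl; tauto. }
  set (A i := match i with None => fun _ : G => True | Some q => fst (sep q) end).
  set (B i := match i with None => fun _ : G => False | Some q => snd (sep q) end).
  destruct (gcompact G _ (fun i => match i with None => W | Some q => B (Some q) end))
    as [l Hl].
  { intros [q|]; simpl; auto. apply (Hsep q). }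
  { intros x. destruct (classic (W x)) as [Wx|Wx]; [now exists None|].
    exists (Some (exist _ x Wx)). apply (Hsep (exist _ x Wx)). }
  exists (fun x => forall i, In i l -> A i x), (fun x => exists i, In i l /\ B i x).
  split; [|split; [|split; [|split]]].
  - apply gopen_inter_list. intros [q|]; [apply (Hsep q)|apply gopen_full].
  - apply gopen_union. intros i. apply gopen_inter; [apply gopen_const|].
    destruct i as [q|]; [apply (Hsep q)|exact (gopen_const False)].
  - intros [q|] _; simpl; auto. apply (Hsep q).
  - intros x HV [[q|] [Hi Hx]]; [|contradiction].
    apply (proj2 (proj2 (proj2 (proj2 (Hsep q)))) x). split; auto. apply (HV _ Hi).
  - intros x HO. destruct (Hl x) as [[q|] [Hi Hx]]; auto.
    exfalso. apply HO. now exists (Some q).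
Qed.

Lemma baire_step (F : G -> Prop) (W : G -> Prop) :
  gopen G (fun x => ~ F x) -> gopen G W -> (exists x, W x /\ ~ F x) ->
  exists V O, gopen G V /\ (exists x, V x) /\ gopen G O /\
    (forall x, V x -> ~ O x) /\ (forall x, ~ O x -> W x /\ ~ F x).
Proof.
  intros HF HW [p Hp].
  destruct (regular p (fun x => W x /\ ~ F x)) as [V [O [HV [HO [Vp [HVO HOW]]]]]];
    auto using gopen_inter.
  exists V, O. repeat split; eauto; apply HOW; auto.
Qed.

Lemma baire (F : nat -> G -> Prop) :
  (forall n, gopen G (fun x => ~ F n x)) -> (forall x, exists n, F n x) ->
  exists n U, gopen G U /\ (exists x, U x) /\ forall x, U x -> F n x.
Proof.
  intros HF Hcover. apply NNPP. intros Hno.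
  assert (Hdense : forall n W, gopen G W -> (exists x, W x) -> exists x, W x /\ ~ F n x).
  { intros n W HW [w Ww]. apply NNPP. intros Hx. apply Hno. exists n, W.
    repeat split; eauto. intros x Wx. apply NNPP. eauto. }
  destruct (dependent_choice (fun n (VO VO' : (G -> Prop) * (G -> Prop)) =>
      gopen G (fst VO) -> (exists x, fst VO x) ->
      gopen G (fst VO') /\ (exists x, fst VO' x) /\ gopen G (snd VO') /\
      (forall x, fst VO' x -> ~ snd VO' x) /\
      (forall x, ~ snd VO' x -> fst VO x /\ ~ F n x))
    (fun _ => True, fun _ => False)) as [f [Hf0 Hf]].
  { intros n [W O0]. simpl.
    destruct (classic (gopen G W /\ exists x, W x)) as [[HW HWne]|Hbad].
    - destruct (baire_step (F n) W (HF n) HW (Hdense n W HW HWne)) as [V [O HVO]].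
      exists (V, O). auto.
    - exists (W, O0). tauto. }
  set (V n := fst (f n)). set (O n := snd (f (S n))).
  assert (HV : forall n, gopen G (V n) /\ exists x, V n x).
  { induction n as [|n [IH1 IH2]]; unfold V; [rewrite Hf0; split; [apply gopen_full|now exists gzero]|].
    destruct (Hf n IH1 IH2) as [? [? _]]; auto. }
  assert (HO : forall n, gopen G (O n) /\ (forall x, V (S n) x -> ~ O n x) /\
                        (forall x, ~ O n x -> V n x /\ ~ F n x)).
  { intros n. destruct (HV n). destruct (Hf n) as [_ [_ HO]]; auto. }
  assert (Vanti : forall n m x, (n <= m)%nat -> V m x -> V n x).
  { intros n m x Hnm. induction Hnm; auto. intros Hx. apply IHHnm, (HO m), (HO m); auto. }
  destruct (gcompact G nat O (fun n => proj1 (HO n))) as [l Hl].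
  { intros x. destruct (Hcover x) as [n Fx]. exists n. apply NNPP. intros Hx.
    apply (HO n) in Hx. tauto. }
  destruct (proj2 (HV (S (list_max l)))) as [y Hy].
  destruct (Hl y) as [n [Hn Hny]].
  assert (Hnl : (n <= list_max l)%nat).
  { pose proof (proj1 (list_max_le l (list_max l)) (le_n _)) as Hall.
    rewrite Forall_forall in Hall. auto. }
  apply ((proj1 (proj2 (HO n))) y); auto. apply (Vanti _ (S (list_max l))); auto. lia.
Qed.

End Topology.

Section BoundedExponent.
Variable G : CompactAbGroup.

Lemma gadd0_l (x : G) : gadd gzero x = x.
Proof. rewrite gaddC; apply gadd0. Qed.

Lemma gnmul_addn a b (x : G) : gnmul (a + b) x = gadd (gnmul a x) (gnmul b x).
Proof. induction a; simpl. - now rewrite gadd0_l. - now rewrite IHa, gaddA. Qed.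

Lemma gnmul_muln a b (x : G) : gnmul (a * b) x = gnmul a (gnmul b x).
Proof. induction a; simpl; auto. now rewrite gnmul_addn, IHa. Qed.

Lemma gnmul0 n : gnmul n (@gzero G) = gzero.
Proof. induction n; simpl; auto. now rewrite IHn, gadd0. Qed.

Lemma gnmul_add n (x y : G) : gnmul n (gadd x y) = gadd (gnmul n x) (gnmul n y).
Proof.
  induction n; simpl. - now rewrite gadd0.
  - rewrite IHn, !gaddA. f_equal. rewrite <- !gaddA. f_equal. apply gaddC.
Qed.

Lemma gnmul_divide a b (x : G) : Nat.divide a b -> gnmul a x = gzero -> gnmul b x = gzero.
Proof. intros [q ->] Hx. now rewrite gnmul_muln, Hx, gnmul0. Qed.

Lemma exponent_of_open_torsion (n : nat) (U : G -> Prop) (u : G) :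
  torsion G -> (0 < n)%nat -> gopen G U -> U u -> (forall x, U x -> gnmul n x = gzero) ->
  exists M, (0 < M)%nat /\ forall x : G, gnmul M x = gzero.
Proof.
  intros HT Hn HU Uu HUn.
  destruct (choice _ HT) as [ord Hord].
  destruct (gcompact G G (fun g x => U (gadd (gadd x (gopp G g)) u))) as [l Hl].
  { intros g. apply (gcont_add G (fun x => gadd x (gopp G g)) (fun _ => u)); auto using gcont_const.
    apply gcont_add; auto using gcont_id, gcont_const. }
  { intros x. exists x. now rewrite gaddN, gadd0_l. }
  set (P := fold_right (fun g acc => (ord g * acc)%nat) 1%nat l).
  assert (HP : (0 < P)%nat /\ forall g, In g l -> Nat.divide (ord g) P).
  { unfold P. clear Hl. induction l as [|g l [IH1 IH2]]; simpl; [split; [lia|intros _ []]|].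
    split; [pose proof (proj1 (Hord g)); nia|].
    intros h [<-|Hh]; [apply Nat.divide_factor_l|].
    apply Nat.divide_mul_r; auto. }
  exists (n * P)%nat. split; [nia|].
  intros x. destruct (Hl x) as [g [Hg Hx]].
  set (v := gadd x (gopp G g)) in Hx.
  assert (Hv : gnmul n v = gzero).
  { pose proof (HUn _ Hx) as Hvu. now rewrite gnmul_add, (HUn u Uu), gadd0 in Hvu. }
  replace x with (gadd v g) by (unfold v; now rewrite <- gaddA, (gaddC G (gopp G g)), gaddN, gadd0).
  assert (Hg0 : gnmul P g = gzero) by (apply (gnmul_divide (ord g)); [apply HP|apply Hord]; auto).
  rewrite gnmul_add, (Nat.mul_comm n P) at 1. rewrite !gnmul_muln, Hv, Hg0, !gnmul0.
  apply gadd0.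
Qed.

Lemma torsion_bounded_exponent :
  torsion G -> exists M, (0 < M)%nat /\ forall x : G, gnmul M x = gzero.
Proof.
  intros HT.
  destruct (baire G (fun n x => gnmul (S n) x = gzero)) as [n [U [HU [[u Uu] HUn]]]].
  - intros n. apply (gcont_nmul G (S n) (fun y => y <> gzero)), gopen_neq.
  - intros x. destruct (HT x) as [[|k] [Hk Hkx]]; [lia|eauto].
  - apply (exponent_of_open_torsion (S n) U u); auto; lia.
Qed.

End BoundedExponent.

Definition Cdist (z w : C) : R := dist_euc (fst z) (snd z) (fst w) (snd w).

Lemma Cdist_refl z : Cdist z z = 0.
Proof. apply distance_refl. Qed.

Lemma Cdist_triangle a b c : Cdist a b <= Cdist a c + Cdist c b.
Proof. apply triangle. Qed.

Lemma Cdist_sq_lt z w r : 0 <= r -> Cnorm2 (fst z - fst w, snd z - snd w) < r² -> Cdist z w < r.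
Proof.
  intros Hr H. unfold Cdist, dist_euc. rewrite <- (sqrt_Rsqr r) by auto.
  apply sqrt_lt_1_alt. split; [apply Rplus_le_le_0_compat; apply Rle_0_sqr|].
  unfold Cnorm2, Rsqr in *; simpl in *; lra.
Qed.

Lemma C_open_ball c r : C_open (fun w => Cdist w c < r).
Proof.
  intros z Hz. exists (Rsqr (r - Cdist z c)). split; [apply Rsqr_pos_lt; lra|].
  intros w Hw. pose proof (Cdist_triangle w c z).
  assert (Cdist w z < r - Cdist z c) by (apply Cdist_sq_lt; auto; lra). lra.
Qed.

Lemma C_open_nbhd V z : C_open V -> V z -> exists r, 0 < r /\ forall w, Cdist w z < r -> V w.
Proof.
  intros HV Vz. destruct (HV z Vz) as [eps [He Hw]].
  exists (sqrt eps). split; [apply sqrt_lt_R0; auto|].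
  intros w Hd. apply Hw. unfold Cdist, dist_euc in Hd. apply sqrt_lt_0_alt in Hd.
  unfold Cnorm2, Rsqr in *; simpl; lra.
Qed.

Lemma C_open_neq c : C_open (fun w => w <> c).
Proof.
  intros z Hz. exists (Cnorm2 (fst z - fst c, snd z - snd c)).
  split; [|intros w Hw ->; unfold Cnorm2 in Hw; simpl in Hw; lra].
  destruct z as [a b], c as [a' b']. unfold Cnorm2; simpl.
  destruct (Req_dec a a'), (Req_dec b b'); subst; [contradiction| |nra|nra].
  pose proof (Rsqr_pos_lt (b - b') ltac:(lra)). unfold Rsqr in *. nra.
Qed.

Lemma Cdist_mul_l a b c : Cnorm2 a = 1 -> Cdist (Cmul a b) (Cmul a c) = Cdist b c.
Proof.
  intros H. unfold Cdist, dist_euc. f_equal. destruct a as [a1 a2], b, c.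
  unfold Cnorm2 in H; unfold Cmul, Rsqr; simpl in *.
  transitivity ((a1 * a1 + a2 * a2) * ((r - r1) * (r - r1) + (r0 - r2) * (r0 - r2))); [ring|].
  rewrite H; ring.
Qed.

Lemma Cdist_mul a b a' b' : Cnorm2 a = 1 -> Cnorm2 b' = 1 ->
  Cdist (Cmul a b) (Cmul a' b') <= Cdist a a' + Cdist b b'.
Proof.
  intros Ha Hb. pose proof (Cdist_triangle (Cmul a b) (Cmul a' b') (Cmul a b')).
  rewrite (Cdist_mul_l a b b' Ha) in H.
  assert (Cdist (Cmul a b') (Cmul a' b') = Cdist a a')
    by (rewrite !(Cmul_comm _ b'); apply Cdist_mul_l; auto).
  lra.
Qed.

Section Characters.
Variable G : CompactAbGroup.

Lemma chi_zero (g : character G) : g gzero = C1.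
Proof.
  pose proof (chi_hom G g gzero gzero) as H. rewrite gadd0 in H.
  pose proof (Cmul_conj_r _ (chi_unit G g gzero)) as Hc.
  transitivity (Cmul (Cmul (g gzero) (g gzero)) (Cconj (g gzero))).
  - now rewrite <- Cmul_assoc, Hc, Cmul_1_r.
  - now rewrite <- H.
Qed.

Lemma chi_nmul (g : character G) n x : g (gnmul n x) = Cpow (g x) n.
Proof. induction n; simpl. - apply chi_zero. - now rewrite chi_hom, IHn. Qed.

Definition char_one : character G.
Proof.
  refine {| chi := fun _ => C1 |}.
  - intros; now rewrite Cmul_1_l.
  - intros; unfold Cnorm2, C1; simpl; ring.
  - intros V HV. apply gopen_const.
Defined.

Definition char_mul (a b : character G) : character G.
Proof.
  refine {| chi := fun x => Cmul (a x) (b x) |}.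
  - intros x y. now rewrite !chi_hom, Cmul_ACA.
  - intros x. rewrite Cnorm2_mul, !chi_unit. ring.
  - intros V HV. apply gopen_union_of. intros x Hx.
    destruct (C_open_nbhd V _ HV Hx) as [r [Hr Hw]].
    exists (fun y => Cdist (a y) (a x) < r / 2 /\ Cdist (b y) (b x) < r / 2).
    split; [|split].
    + apply gopen_inter;
        [apply (chi_cont G a (fun w => Cdist w (a x) < r / 2))
        |apply (chi_cont G b (fun w => Cdist w (b x) < r / 2))]; apply C_open_ball.
    + rewrite !Cdist_refl; lra.
    + intros y [A B]. apply Hw. eapply Rle_lt_trans; [apply Cdist_mul; apply chi_unit|lra].
Defined.

Fixpoint char_pow (a : character G) (n : nat) : character G :=
  match n with O => char_one | S m => char_mul a (char_pow a m) end.

Lemma char_pow_val a n x : char_pow a n x = Cpow (a x) n.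
Proof. induction n; simpl; auto. now rewrite <- IHn. Qed.

Lemma dual_subgroup_ext (H : character G -> Prop) : dual_subgroup H ->
  forall a b : character G, H a -> (forall x, b x = a x) -> H b.
Proof.
  intros [H1 [Hm _]] a b Ha Hb. apply (Hm a char_one b); auto.
  - now apply H1.
  - intros x. rewrite Hb. symmetry. apply Cmul_1_r.
Qed.

Lemma dual_subgroup_one (H : character G -> Prop) : dual_subgroup H -> H char_one.
Proof. intros [H1 _]. now apply H1. Qed.

Lemma dual_subgroup_mul (H : character G -> Prop) : dual_subgroup H ->
  forall a b, H a -> H b -> H (char_mul a b).
Proof. intros [_ [Hm _]] a b Ha Hb. now apply (Hm a b). Qed.

Lemma dual_subgroup_pow (H : character G -> Prop) : dual_subgroup H ->
  forall a n, H a -> H (char_pow a n).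
Proof.
  intros HH a n Ha. induction n; simpl; [now apply dual_subgroup_one|now apply dual_subgroup_mul].
Qed.

Definition generated (l : list (character G)) (r : character G) : Prop :=
  forall H, dual_subgroup H -> (forall eta, In eta l -> H eta) -> H r.

Lemma generated_one l : generated l char_one.
Proof. intros H HH _. now apply dual_subgroup_one. Qed.

Lemma generated_cons eta l r k :
  generated l r -> generated (eta :: l) (char_mul (char_pow eta k) r).
Proof.
  intros Hr H HH Hl. apply dual_subgroup_mul; auto.
  - apply dual_subgroup_pow; auto. apply Hl; now left.
  - apply Hr; auto. intros e He; apply Hl; now right.
Qed.

End Characters.

Section TrigPoly.
Variable G : CompactAbGroup.

Definition tp_one : list (G * C) := (gzero, C1) :: nil.

Definition tp_mul (p q : list (G * C)) : list (G * C) :=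
  flat_map (fun a => map (fun b => (gadd (fst a) (fst b), Cmul (snd a) (snd b))) q) p.

Lemma trig_poly_one (g : character G) : trig_poly tp_one g = C1.
Proof. unfold trig_poly, tp_one; simpl. rewrite chi_zero, Cmul_1_l. Cring. Qed.

Lemma trig_poly_app p q (g : character G) :
  trig_poly (p ++ q) g = Cadd (trig_poly p g) (trig_poly q g).
Proof.
  induction p as [|a p IH]; simpl; [now rewrite Cadd_0_l|].
  unfold trig_poly in *; simpl. now rewrite IH, Cadd_assoc.
Qed.

Lemma trig_poly_shift x c q (g : character G) :
  trig_poly (map (fun b => (gadd x (fst b), Cmul c (snd b))) q) g =
  Cmul (Cmul c (g x)) (trig_poly q g).
Proof.
  induction q as [|[y d] q IH]; simpl; [now rewrite Cmul_0_r|].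
  unfold trig_poly in *; simpl. rewrite IH, Cmul_addr, chi_hom. f_equal. apply Cmul_ACA.
Qed.

Lemma trig_poly_mul p q (g : character G) :
  trig_poly (tp_mul p q) g = Cmul (trig_poly p g) (trig_poly q g).
Proof.
  induction p as [|[x c] p IH]; simpl; [now rewrite Cmul_0_l|].
  unfold tp_mul in *; simpl. rewrite trig_poly_app, IH, trig_poly_shift.
  unfold trig_poly at 3; simpl. now rewrite Cmul_addl.
Qed.

Lemma trig_poly_prod (ps : list (list (G * C))) (g : character G) :
  trig_poly (fold_right tp_mul tp_one ps) g = fold_right Cmul C1 (map (fun p => trig_poly p g) ps).
Proof.
  induction ps as [|p ps IH]; simpl; [apply trig_poly_one|]. now rewrite trig_poly_mul, IH.
Qed.

Lemma trig_poly_ext p (a b : character G) : (forall x, In x (map fst p) -> a x = b x) ->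
  trig_poly p a = trig_poly p b.
Proof.
  induction p as [|[x c] p IH]; simpl; intros Hx; auto.
  unfold trig_poly in *; simpl. rewrite IH, Hx; auto.
Qed.

Fixpoint tp_geom (g : character G) (x : G) (n : nat) : list (G * C) :=
  match n with
  | O => nil
  | S m => (gnmul m x, Cconj (g (gnmul m x))) :: tp_geom g x m
  end.

Lemma trig_poly_geom (g psi : character G) x n :
  trig_poly (tp_geom g x n) psi = Cgeom (Cmul (Cconj (g x)) (psi x)) n.
Proof.
  induction n; simpl; auto. unfold trig_poly in *; simpl. rewrite IHn.
  now rewrite !chi_nmul, Cconj_pow, Cpow_Cmul.
Qed.

Lemma annihilator_subgroup (xs : list G) :
  dual_subgroup (fun eta : character G => forall x, In x xs -> eta x = C1).
Proof.
  split; [|split].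
  - intros e He x _. apply He.
  - intros a b c Ha Hb Hc x Hx. now rewrite Hc, Ha, Hb, Cmul_1_l.
  - intros a b Ha Hb x Hx. rewrite Hb, (Ha x Hx). Cring.
Qed.

End TrigPoly.

Section Duality.
Variable G : CompactAbGroup.
Variable M : nat.
Hypothesis M_pos : (0 < M)%nat.
Hypothesis G_exponent : forall x : G, gnmul M x = gzero.

Lemma chi_pow_exponent (g : character G) x : Cpow (g x) M = C1.
Proof. now rewrite <- chi_nmul, G_exponent, chi_zero. Qed.

Lemma chi_root (g : character G) x : exists j, (j < M)%nat /\ g x = root M j.
Proof.
  destruct (root_surj M M_pos (g x) (chi_unit G g x) (chi_pow_exponent g x)) as [j Hj].
  exists (j mod M). split; [apply Nat.mod_upper_bound; lia|]. now rewrite Hj, root_mod.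
Qed.

Lemma chi_pow_pred_mul (g : character G) x : Cmul (Cpow (g x) (M - 1)) (g x) = C1.
Proof. apply Cpow_pred_mul; auto using chi_pow_exponent. Qed.

Definition gsubmonoid (S : G -> Prop) : Prop :=
  S gzero /\ forall x y, S x -> S y -> S (gadd x y).

Lemma gsubmonoid_nmul S n x : gsubmonoid S -> S x -> S (gnmul n x).
Proof. intros [S0 Sadd] Sx. induction n; simpl; auto. Qed.

Lemma gsubmonoid_ker S (eta : character G) :
  gsubmonoid S -> gsubmonoid (fun x => S x /\ eta x = C1).
Proof.
  intros [S0 Sadd]. split; [split; auto; apply chi_zero|].
  intros x y [Sx Ex] [Sy Ey]. split; auto. now rewrite chi_hom, Ex, Ey, Cmul_1_l.
Qed.

Lemma char_image_cyclic (S : G -> Prop) (eta : character G) : gsubmonoid S ->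
  exists x0 e, S x0 /\ (0 < e)%nat /\ Cpow (eta x0) e = C1 /\
    (forall x, S x -> exists t, eta x = Cpow (eta x0) t) /\
    (forall w, Cnorm2 w = 1 -> Cpow w e = C1 -> exists c, w = Cpow (eta x0) c).
Proof.
  intros [S0 Sadd].
  destruct (root_subgroup_cyclic M M_pos (fun z => exists x, S x /\ eta x = z))
    as [zeta [e [[x0 [Sx0 <-]] [He [Hze [Hgen Hsol]]]]]]; auto.
  - exists gzero. split; auto. apply chi_zero.
  - intros a b [x [Sx <-]] [y [Sy <-]]. exists (gadd x y). split; auto. apply chi_hom.
  - intros z [x [_ <-]]. destruct (chi_root eta x) as [j [_ Hj]]. eauto.
  - exists x0, e. repeat split; auto. intros x Sx. apply Hgen. eauto.
Qed.

Lemma char_factor (S : G -> Prop) (eta Phi : character G) : gsubmonoid S ->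
  (forall x, S x -> eta x = C1 -> Phi x = C1) ->
  exists k, forall x, S x -> Cmul (Cpow (eta x) k) (Phi x) = C1.
Proof.
  intros HS HPhi.
  destruct (char_image_cyclic S eta HS) as [x0 [e [Sx0 [He [Hze [Hgen Hsol]]]]]].
  destruct (Hsol (Phi x0) (chi_unit G Phi x0)) as [c Hc].
  { rewrite <- chi_nmul. apply HPhi; [now apply gsubmonoid_nmul|]. now rewrite chi_nmul. }
  exists ((M - 1) * c)%nat. intros x Sx.
  destruct (Hgen x Sx) as [t Ht].
  set (y := gadd x (gnmul ((M - 1) * t) x0)).
  assert (Hy : eta y = C1).
  { unfold y. rewrite chi_hom, chi_nmul, Ht, <- Cpow_add.
    replace (t + (M - 1) * t)%nat with (t * M)%nat by nia.
    now rewrite Cpow_mul, chi_pow_exponent, Cpow_C1. }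
  assert (HPy : Phi y = C1) by (apply HPhi; auto; apply HS; auto; now apply gsubmonoid_nmul).
  unfold y in HPy. rewrite chi_hom, chi_nmul, Hc, <- Cpow_mul in HPy.
  rewrite Ht, <- Cpow_mul, Cmul_comm.
  now replace ((M - 1) * c * t)%nat with ((M - 1) * t * c)%nat by lia.
Qed.

Lemma char_equations_solvable (l : list (character G)) :
  forall (S : G -> Prop) (ch : character G) (w : C),
  gsubmonoid S -> Cnorm2 w = 1 ->
  (forall r b, generated G l r -> (forall x, S x -> Cmul (r x) (Cpow (ch x) b) = C1) ->
     Cpow w b = C1) ->
  exists x, S x /\ (forall eta, In eta l -> eta x = C1) /\ ch x = w.
Proof.
  induction l as [|eta l IH]; intros S ch w HS Hw Hrel.
  - destruct (char_image_cyclic S ch HS) as [x0 [e [Sx0 [He [Hze [Hgen Hsol]]]]]].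
    destruct (Hsol w Hw) as [c ->].
    { apply (Hrel (char_one G) e (generated_one G nil)). intros x Sx.
      destruct (Hgen x Sx) as [t ->]. simpl.
      now rewrite Cmul_1_l, <- !Cpow_mul, Nat.mul_comm, Cpow_mul, Hze, Cpow_C1. }
    exists (gnmul c x0). split; [now apply gsubmonoid_nmul|]. split; [intros _ []|].
    apply chi_nmul.
  - destruct (IH (fun x => S x /\ eta x = C1) ch w) as [x [[Sx Ex] [Hl Hx]]];
      auto using gsubmonoid_ker.
    + intros r b Hr Hrb.
      destruct (char_factor S eta (char_mul G r (char_pow G ch b)) HS) as [k Hk].
      { intros x Sx Ex. simpl. rewrite char_pow_val. auto. }
      apply (Hrel (char_mul G (char_pow G eta k) r) b (generated_cons G eta l r k Hr)).
      intros x Sx. specialize (Hk x Sx). simpl in *. rewrite !char_pow_val in *.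
      now rewrite <- Cmul_assoc.
    + exists x. split; auto. split; auto. intros e [<-|He]; auto.
Qed.

Lemma char_order_mod (H : character G -> Prop) (ch : character G) : dual_subgroup H ->
  exists d, (0 < d)%nat /\ forall b, H (char_pow G ch b) <-> (b mod d = 0)%nat.
Proof.
  intros HH. apply nat_subgroup_multiples with M; auto.
  - apply (dual_subgroup_ext G H HH (char_one G)); [now apply dual_subgroup_one|].
    intros x. rewrite char_pow_val. apply chi_pow_exponent.
  - intros a b Ha Hb. apply (dual_subgroup_ext G H HH (char_mul G (char_pow G ch a) (char_pow G ch b))).
    + now apply dual_subgroup_mul.
    + intros x. simpl. now rewrite !char_pow_val, Cpow_add.
  - intros a b Hab Ha.
    apply (dual_subgroup_ext G H HH
             (char_mul G (char_pow G ch (a + b)) (char_pow G (char_pow G ch a) (M - 1)))).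
    + apply dual_subgroup_mul; auto. now apply dual_subgroup_pow.
    + intros x. simpl. rewrite !char_pow_val, Cpow_add, Cmul_comm, Cmul_assoc.
      rewrite <- (Cmul_1_l (Cpow (ch x) b)) at 1. f_equal.
      rewrite <- (chi_pow_pred_mul (char_pow G ch a) x). now rewrite char_pow_val.
Qed.

Lemma annihilator_value_finite (H : character G -> Prop) (ch : character G) d :
  dual_subgroup H -> (0 < d)%nat -> (forall b, H (char_pow G ch b) <-> (b mod d = 0)%nat) ->
  forall l, (forall eta, In eta l -> H eta) ->
  exists x, (forall eta, In eta l -> eta x = C1) /\ ch x = root d 1.
Proof.
  intros HH Hd Hord l Hl.
  destruct (char_equations_solvable l (fun _ => True) ch (root d 1)) as [x [_ Hx]];
    [split; auto|apply root_norm; lia| |eauto].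
  intros r b Hr Hrb. rewrite root_pow, Nat.mul_1_r, root_eq1 by lia.
  apply Hord, (dual_subgroup_ext G H HH (char_pow G r (M - 1))).
  - apply dual_subgroup_pow, Hr; auto.
  - intros x. rewrite !char_pow_val.
    transitivity (Cmul (Cmul (Cpow (r x) (M - 1)) (r x)) (Cpow (ch x) b)).
    + now rewrite chi_pow_pred_mul, Cmul_1_l.
    + now rewrite <- Cmul_assoc, (Hrb x I), Cmul_1_r.
Qed.

(** Every subgroup of the dual is closed. *)
Lemma annihilator_separates (H : character G -> Prop) (ch : character G) :
  dual_subgroup H -> ~ H ch -> exists x, (forall eta, H eta -> eta x = C1) /\ ch x <> C1.
Proof.
  intros HH Hch.
  destruct (char_order_mod H ch HH) as [d [Hd Hord]].
  assert (Hd1 : (1 < d)%nat).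
  { destruct (Nat.eq_dec d 1) as [->|]; [|lia]. exfalso. apply Hch.
    apply (dual_subgroup_ext G H HH (char_pow G ch 1)); [apply Hord; auto|].
    intros x. rewrite char_pow_val. symmetry. apply Cmul_1_r. }
  destruct (compact_fip G {eta | H eta}
              (fun eta x => proj1_sig eta x = C1 /\ ch x = root d 1)) as [x Hx].
  - intros [eta Heta].
    apply (gopen_ext G (fun x => eta x <> C1 \/ ch x <> root d 1)).
    { intros x; simpl. destruct (classic (eta x = C1)); tauto. }
    apply gopen_or; [apply (chi_cont G eta (fun z => z <> C1))
                    |apply (chi_cont G ch (fun z => z <> root d 1))]; apply C_open_neq.
  - intros l.
    destruct (annihilator_value_finite H ch d HH Hd Hord (map (@proj1_sig _ _) l))
      as [x [Hl Hx]].
    { intros eta Heta. apply in_map_iff in Heta. destruct Heta as [[e He] [<- _]]. auto. }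
    exists x. intros [eta Heta] Hin. split; auto. apply Hl.
    apply in_map_iff. exists (exist _ eta Heta); auto.
  - exists x. split.
    + intros eta Heta. apply (Hx (exist _ eta Heta)).
    + rewrite (proj2 (Hx (exist _ (char_one G) (dual_subgroup_one G H HH)))).
      rewrite root_eq1, Nat.mod_small; lia.
Qed.

Lemma in_coset_of_quotient (H : character G -> Prop) (delta gamma : character G) :
  H (char_mul G (char_pow G delta (M - 1)) gamma) -> in_coset delta H gamma.
Proof.
  intros Hd. exists (char_mul G (char_pow G delta (M - 1)) gamma). split; auto.
  intros x. simpl. rewrite char_pow_val, Cmul_assoc, (Cmul_comm (delta x)).
  now rewrite chi_pow_pred_mul, Cmul_1_l.
Qed.

Lemma annihilator_finite_index (xs : list G) :
  finite_index (fun eta : character G => forall x, In x xs -> eta x = C1).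
Proof.
  destruct (finite_image_reps (fun gamma : character G => map gamma xs)
              (lists_over (map (root M) (seq 0 M)) (length xs))) as [reps Hreps].
  - intros gamma. rewrite <- (length_map gamma xs). apply in_lists_over.
    intros z Hz. apply in_map_iff in Hz. destruct Hz as [x [<- _]].
    destruct (chi_root gamma x) as [j [Hj ->]].
    apply in_map, in_seq. lia.
  - exists reps. intros gamma. destruct (Hreps gamma) as [delta [Hdelta Heq]].
    exists delta. split; auto. apply in_coset_of_quotient.
    intros x Hx. simpl. rewrite char_pow_val.
    rewrite (proj1 map_ext_in_iff Heq x Hx).
    apply chi_pow_pred_mul.
Qed.

Lemma ubiquitous_spd (K : character G -> Prop) : ubiquitous K -> strictly_positive_definite K.
Proof.
  intros Hubi p Hp gamma.
  destruct (Hubi _ (annihilator_subgroup G (map fst p)) (annihilator_finite_index (map fst p)) gamma)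
    as [k [Kk [eta [Heta Hk]]]].
  rewrite <- (Hp k Kk). apply trig_poly_ext. intros x Hx.
  now rewrite Hk, (Heta x Hx), Cmul_1_r.
Qed.

Lemma not_in_coset_separated (H : character G -> Prop) (gamma delta : character G) :
  dual_subgroup H -> ~ in_coset gamma H delta ->
  exists x, (forall eta, H eta -> eta x = C1) /\ delta x <> gamma x.
Proof.
  intros HH Hnot.
  set (ch := char_mul G (char_pow G gamma (M - 1)) delta).
  destruct (annihilator_separates H ch HH) as [x [Hx Hchx]].
  { intros Hch. apply Hnot. now apply in_coset_of_quotient. }
  exists x. split; auto. intros E. apply Hchx. unfold ch. simpl.
  rewrite char_pow_val, E. apply chi_pow_pred_mul.
Qed.

Lemma char_geom_eq0 (gamma psi : character G) x :
  psi x <> gamma x -> Cgeom (Cmul (Cconj (gamma x)) (psi x)) M = C0.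
Proof.
  intros Hne. apply Cgeom_eq0.
  - rewrite Cpow_Cmul, <- Cconj_pow, !chi_pow_exponent, Cmul_1_r. Cring.
  - intros E. apply Hne, Cmul_conj_eq1; auto. apply chi_unit.
Qed.

Lemma char_geom_self_neq0 (gamma : character G) x :
  Cgeom (Cmul (Cconj (gamma x)) (gamma x)) M <> C0.
Proof.
  rewrite Cmul_comm, Cmul_conj_r, Cgeom_C1 by apply chi_unit.
  unfold C0. intros E. injection E as E. pose proof (lt_0_INR M M_pos). lra.
Qed.

Lemma spd_ubiquitous (K : character G -> Prop) : strictly_positive_definite K -> ubiquitous K.
Proof.
  intros Hspd H HH [reps Hreps] gamma. apply NNPP. intros Hno.
  destruct (choice (fun delta x => ~ in_coset gamma H delta ->
      (forall eta, H eta -> eta x = C1) /\ delta x <> gamma x)) as [pt Hpt].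
  { intros delta. destruct (classic (in_coset gamma H delta)) as [Hin|Hout].
    - exists gzero. tauto.
    - destruct (not_in_coset_separated H gamma delta HH Hout) as [x Hx]. eauto. }
  set (P := fold_right (tp_mul G) (tp_one G) (map (fun d => tp_geom G gamma (pt d) M) reps)).
  assert (HP : forall psi, trig_poly P psi =
      fold_right Cmul C1 (map (fun d => Cgeom (Cmul (Cconj (gamma (pt d))) (psi (pt d))) M) reps)).
  { intros psi. unfold P. rewrite trig_poly_prod, map_map. f_equal.
    apply map_ext. intros d. apply trig_poly_geom. }
  apply (Cprod_neq0 (map (fun d => Cgeom (Cmul (Cconj (gamma (pt d))) (gamma (pt d))) M) reps)).
  { intros z Hz. apply in_map_iff in Hz. destruct Hz as [d [<- _]]. apply char_geom_self_neq0. }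
  rewrite <- HP. apply Hspd. intros psi Kpsi. rewrite HP. apply Cprod_eq0, in_map_iff.
  destruct (Hreps psi) as [d [Hd [eta [Heta Hpsi]]]].
  assert (Hout : ~ in_coset gamma H d).
  { intros [eta1 [Heta1 Hd1]]. apply Hno. exists psi. split; auto.
    exists (char_mul G eta1 eta). split; [now apply dual_subgroup_mul|].
    intros x. simpl. now rewrite Hpsi, Hd1, Cmul_assoc. }
  destruct (Hpt d Hout) as [Hann Hneq].
  exists d. split; auto. apply char_geom_eq0.
  now rewrite Hpsi, (Hann eta Heta), Cmul_1_r.
Qed.

End Duality.

Theorem theorem2p8 (G : CompactAbGroup) (HG : torsion G)
    (K : character G -> Prop) :
  strictly_positive_definite K <-> ubiquitous K.
Proof.
  destruct (torsion_bounded_exponent G HG) as [M [HM HMx]].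
  split; [apply (spd_ubiquitous G M HM HMx)|apply (ubiquitous_spd G M HM HMx)].
Qed.
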